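(* Under Weak Ordering, in the limit $m\to\infty$, $\Pr[B_0]=2/3$ and $\Pr[B_\gamma]=2^{-\gamma}/3$ for every integer $\gamma>0$.
   Context: Fix $m\ge 1$. A random program is a sequence $x_1,\dots,x_{m+2}$ of memory operations, each with a type in $\{\mathrm{LD},\mathrm{ST}\}$: $x_1,\dots,x_m$ have i.i.d. types, each $\mathrm{ST}$ with probability $1/2$ and $\mathrm{LD}$ with probability $1/2$; $x_{m+1}$ (the critical load) has type $\mathrm{LD}$ and $x_{m+2}$ (the critical store) has type $\mathrm{ST}$. The initial order is $S_0=(x_1,\dots,x_{m+2})$. A memory model is specified by the set of ordered type pairs $(\tau_1,\tau_2)$ for which an instruction of type $\tau_2$ may be moved ahead of an immediately preceding instruction of type $\tau_1$: Sequential Consistency (SC) allows no pair; Total Store Order (TSO) allows only the pair $(\mathrm{ST},\mathrm{LD})$ (a load may move ahead of a preceding store); Weak Ordering (WO) allows all four pairs. The settling process runs rounds $r=1,\dots,m+2$. Before round $r$, the current order $S_{r-1}$ consists of $x_1,\dots,x_{r-1}$ in some order in positions $1,\dots,r-1$, followed by $x_r,\dots,x_{m+2}$ in positions $r,\dots,m+2$. In round $r$, instruction $x_r$ (starting at position $r$) repeatedly attempts to swap with the instruction immediately preceding it in the current order: the attempt fails automatically if the pair (type of the preceding instruction, type of $x_r$) is not allowed by the memory model, or if $x_r$ is the critical store and the preceding instruction is the critical load; otherwise the attempt succeeds independently with probability $1/2$. The round ends when an attempt fails or $x_r$ reaches position $1$; the resulting order is $S_r$. The final order is $S_{m+2}$.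 For $\gamma\ge 0$, $B_\gamma$ is the event that in $S_{m+2}$ exactly $\gamma$ instructions lie strictly between the critical load and the critical store. *)

From Stdlib Require Import Reals List Arith Bool.
Import ListNotations.
Open Scope R_scope.

Inductive ty := LD | ST.

(* A memory model: [M t1 t2 = true] iff an instruction of type t2 may be
   moved ahead of an immediately preceding instruction of type t1. *)
Definition model := ty -> ty -> bool.
Definition SC : model := fun _ _ => false.
Definition TSO : model := fun a b =>
  match a, b with ST, LD => true | _, _ => false end.
Definition WO : model := fun _ _ => true.

Definition dist (A : Type) := list (R * A).
Definition dret {A} (a : A) : dist A := [(1, a)].
Definition dbind {A B} (d : dist A) (f : A -> dist B) : dist B :=
  flat_map (fun pa => map (fun qb => (fst pa * fst qb, snd qb)) (f (snd pa))) d.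
Definition dmix {A} (d1 d2 : dist A) : dist A :=
  map (fun p => (/2 * fst p, snd p)) d1 ++ map (fun p => (/2 * fst p, snd p)) d2.
Definition dprob {A} (P : A -> bool) (d : dist A) : R :=
  fold_right Rplus 0 (map (fun p => if P (snd p) then fst p else 0) d).

(* Instructions are labelled 1..m+2 (x_i is labelled i); [bs] lists the
   types of x_1..x_m; x_{m+1} is LD (critical load), x_{m+2} is ST
   (critical store). *)
Definition typ (m : nat) (bs : list ty) (i : nat) : ty :=
  if (i <=? m)%nat then nth (i - 1) bs LD
  else if (i =? m + 1)%nat then LD else ST.

(* x moves left: [prev] is the part of the order before x, reversed
   (nearest instruction first), [post] the part after x. *)
Fixpoint climb (ok : nat -> bool) (prev : list nat) (x : nat) (post : list nat)
  : dist (list nat) :=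
  match prev with
  | [] => dret (x :: post)
  | y :: prev' =>
      if ok y
      then dmix (climb ok prev' x (y :: post)) (dret (rev prev ++ x :: post))
      else dret (rev prev ++ x :: post)
  end.

(* Round r: the instruction at position r (1-based) settles. *)
Definition round (M : model) (m : nat) (bs : list ty) (r : nat) (S : list nat)
  : dist (list nat) :=
  let x := nth (r - 1) S 0%nat in
  let ok (y : nat) :=
    M (typ m bs y) (typ m bs x) && negb ((x =? m + 2)%nat && (y =? m + 1)%nat) in
  climb ok (rev (firstn (r - 1) S)) x (skipn r S).

Fixpoint settle (M : model) (m : nat) (bs : list ty) (rounds : list nat)
  (S : list nat) : dist (list nat) :=
  match rounds with
  | [] => dret S
  | r :: rs => dbind (round M m bs r S) (settle M m bs rs)
  end.

Fixpoint tylists (n : nat) : list (list ty) :=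
  match n with
  | O => [[]]
  | S n' => flat_map (fun l => [LD :: l; ST :: l]) (tylists n')
  end.

Definition program (m : nat) : dist (list ty) :=
  map (fun bs => ((/2) ^ m, bs)) (tylists m).

Definition final_order (M : model) (m : nat) : dist (list nat) :=
  dbind (program m)
    (fun bs => settle M m bs (seq 1 (m + 2)) (seq 1 (m + 2))).

Fixpoint pos (x : nat) (l : list nat) : nat :=
  match l with
  | [] => 0%nat
  | y :: l' => if (y =? x)%nat then 0%nat else S (pos x l')
  end.

Definition gap (m : nat) (S : list nat) : nat :=
  let i := pos (m + 1) S in
  let j := pos (m + 2) S in
  (Nat.max i j - Nat.min i j - 1)%nat.

Definition PrB (M : model) (m gamma : nat) : R :=
  dprob (fun S => (gap m S =? gamma)%nat) (final_order M m).

From Pilot Require Import Defs.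
From Stdlib Require Import Reals Lra Lia List Arith Bool.
Import ListNotations.
Open Scope R_scope.

(* Under weak ordering every swap is permitted except the critical store
   passing the critical load.  So rounds 1..m merely shuffle x_1..x_m and the
   outcome is decided by the last two rounds: the critical load climbs K
   places, K geometric of parameter 1/2 truncated at m; then the critical
   store climbs J places through the K instructions now separating it from
   the load, J geometric truncated at K.  The gap is K - J, which gives
   Pr[B_0] = 2/3 + 4^-m / 3 and Pr[B_g] = 2^-g (1/3 + 4^-(m-g) / 6) for
   0 < g <= m, whence the limits. *)

Definition dexp {A} (d : Defs.dist A) (h : A -> R) : R :=
  fold_right Rplus 0 (map (fun p => fst p * h (snd p)) d).

Lemma dexp_cons {A} (p : R * A) d h : dexp (p :: d) h = fst p * h (snd p) + dexp d h.
Proof. reflexivity. Qed.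

Lemma dexp_app {A} (d1 d2 : Defs.dist A) h : dexp (d1 ++ d2) h = dexp d1 h + dexp d2 h.
Proof.
  induction d1 as [|p d1 IH]; simpl app; [cbn; ring|].
  rewrite !dexp_cons, IH; ring.
Qed.

Lemma dexp_scale {A} c (d : Defs.dist A) h :
  dexp (map (fun p => (c * fst p, snd p)) d) h = c * dexp d h.
Proof.
  induction d as [|p d IH]; simpl map; [cbn; ring|].
  rewrite !dexp_cons, IH; simpl; ring.
Qed.

Lemma dexp_ret {A} (a : A) h : dexp (dret a) h = h a.
Proof. cbn; ring. Qed.

Lemma dexp_mix {A} (d1 d2 : Defs.dist A) h :
  dexp (dmix d1 d2) h = / 2 * dexp d1 h + / 2 * dexp d2 h.
Proof. unfold dmix; rewrite dexp_app, !dexp_scale; ring. Qed.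

Lemma dexp_bind {A B} (d : Defs.dist A) (f : A -> Defs.dist B) h :
  dexp (dbind d f) h = dexp d (fun a => dexp (f a) h).
Proof.
  induction d as [|p d IH]; [reflexivity|].
  unfold dbind in *; simpl flat_map.
  rewrite dexp_app, IH, dexp_cons, dexp_scale; reflexivity.
Qed.

Lemma in_dmix {A} (d1 d2 : Defs.dist A) p :
  In p (dmix d1 d2) -> exists p', snd p' = snd p /\ (In p' d1 \/ In p' d2).
Proof.
  unfold dmix; intros H.
  apply in_app_or in H as [H|H]; apply in_map_iff in H as [p' [<- Hp']];
    exists p'; simpl; auto.
Qed.

Lemma dexp_const_in {A} (d : Defs.dist A) h c :
  dexp d (fun _ => 1) = 1 -> (forall p, In p d -> h (snd p) = c) -> dexp d h = c.
Proof.
  intros Hmass Hc; rewrite <- (Rmult_1_r c), <- Hmass; clear Hmass.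
  induction d as [|p d IH]; [cbn; ring|].
  rewrite !dexp_cons, Hc, IH; [ring| |simpl; auto].
  intros q Hq; apply Hc; simpl; auto.
Qed.

Lemma dprob_dexp {A} (P : A -> bool) d : dprob P d = dexp d (fun a => if P a then 1 else 0).
Proof.
  induction d as [|p d IH]; [reflexivity|].
  rewrite dexp_cons, <- IH; unfold dprob; simpl.
  destruct (P (snd p)); ring.
Qed.

(* [geom_avg n h] is the mean of [h K] for [K] geometric of parameter 1/2
   (number of successes before the first failure) truncated at [n]. *)
Fixpoint geom_avg (n : nat) (h : nat -> R) : R :=
  match n with
  | O => h O
  | S n' => / 2 * h O + / 2 * geom_avg n' (fun j => h (S j))
  end.

Lemma geom_avg_ext n h1 h2 :
  (forall j, (j <= n)%nat -> h1 j = h2 j) -> geom_avg n h1 = geom_avg n h2.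
Proof.
  revert h1 h2; induction n as [|n IH]; intros h1 h2 H; simpl.
  - apply H; lia.
  - rewrite H by lia; f_equal; f_equal; apply IH; intros; apply H; lia.
Qed.

Lemma geom_avg_const n c : geom_avg n (fun _ => c) = c.
Proof. induction n as [|n IH]; simpl; [|rewrite IH]; field. Qed.

Lemma geom_avg_S_r n h :
  geom_avg (S n) h = geom_avg n h + (/ 2) ^ S n * (h (S n) - h n).
Proof.
  revert h; induction n as [|n IH]; intros h.
  - simpl; field.
  - change (geom_avg (S (S n)) h) with (/ 2 * h O + / 2 * geom_avg (S n) (fun j => h (S j))).
    rewrite IH; simpl; field.
Qed.

Definition geom_pmf (n i : nat) : R :=
  if (i <? n)%nat then (/ 2) ^ S i else if (i =? n)%nat then (/ 2) ^ n else 0.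

Lemma geom_avg_indicator n i :
  geom_avg n (fun j => if (j =? i)%nat then 1 else 0) = geom_pmf n i.
Proof.
  revert i; induction n as [|n IH]; intros [|i]; unfold geom_pmf; simpl.
  - ring.
  - reflexivity.
  - rewrite (geom_avg_const n 0); ring.
  - rewrite IH; unfold geom_pmf; change (S i <? S n)%nat with (i <? n)%nat.
    destruct (i <? n)%nat; [|destruct (i =? n)%nat]; simpl; ring.
Qed.

Definition gap_law (m : nat) (f : nat -> R) : R :=
  geom_avg m (fun k => geom_avg k (fun j => f (k - j)%nat)).

Lemma gap_law_indicator m g :
  gap_law m (fun d => if (d =? g)%nat then 1 else 0) =
  geom_avg m (fun k => if (g <=? k)%nat then geom_pmf k (k - g) else 0).
Proof.
  apply geom_avg_ext; intros k _.
  destruct (Nat.leb_spec g k).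
  - rewrite <- geom_avg_indicator; apply geom_avg_ext; intros j Hj.
    destruct (Nat.eqb_spec (k - j) g), (Nat.eqb_spec j (k - g)); lia || reflexivity.
  - transitivity (geom_avg k (fun _ => 0)); [|apply geom_avg_const].
    apply geom_avg_ext; intros j _.
    destruct (Nat.eqb_spec (k - j) g); lia || reflexivity.
Qed.

Lemma climb_mass ok prev x post : dexp (climb ok prev x post) (fun _ => 1) = 1.
Proof.
  revert x post; induction prev as [|y prev IH]; intros x post; cbn [climb].
  - rewrite dexp_ret; reflexivity.
  - destruct (ok y); rewrite ?dexp_mix, ?IH, dexp_ret; field.
Qed.

Lemma climb_support ok prev x post p : In p (climb ok prev x post) ->
  exists l, snd p = l ++ post /\ length l = S (length prev) /\
            (forall z, In z l -> z = x \/ In z prev).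
Proof.
  revert x post p; induction prev as [|y prev IH]; intros x post p Hp; cbn [climb] in Hp.
  - destruct Hp as [<-|[]]; exists [x]; repeat split; auto.
    intros z [->|[]]; auto.
  - assert (Hstop : exists l, rev (y :: prev) ++ x :: post = l ++ post /\
        length l = S (length (y :: prev)) /\
        (forall z, In z l -> z = x \/ In z (y :: prev))).
    { exists (rev (y :: prev) ++ [x]); repeat split.
      - rewrite <- app_assoc; reflexivity.
      - rewrite length_app, length_rev; simpl; lia.
      - intros z Hz; apply in_app_or in Hz as [Hz|[->|[]]]; auto.
        right; apply in_rev; auto. }
    destruct (ok y); [|destruct Hp as [<-|[]]; exact Hstop].
    apply in_dmix in Hp as [p' [<- [Hp'|[<-|[]]]]]; [|exact Hstop].
    destruct (IH _ _ _ Hp') as [l [-> [Hlen Hl]]].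
    exists (l ++ [y]); repeat split.
    + rewrite <- app_assoc; reflexivity.
    + rewrite length_app, Hlen; simpl; lia.
    + intros z Hz; apply in_app_or in Hz as [Hz|[->|[]]]; simpl; auto.
      destruct (Hl _ Hz); auto.
Qed.

(* [run] is the stretch of instructions the climber may pass, [rest] starts
   with the first one it may not. *)
Lemma dexp_climb ok run rest x post h :
  (forall y, In y run -> ok y = true) ->
  match rest with [] => True | y :: _ => ok y = false end ->
  dexp (climb ok (run ++ rest) x post) h =
  geom_avg (length run) (fun j =>
    h (rev (skipn j (run ++ rest)) ++ x :: rev (firstn j (run ++ rest)) ++ post)).
Proof.
  revert post; induction run as [|y run IH]; intros post Hrun Hrest.
  - destruct rest as [|y rest]; cbn [climb app]; [|rewrite Hrest]; rewrite dexp_ret; reflexivity.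
  - cbn [app climb]; rewrite Hrun by (simpl; auto).
    rewrite dexp_mix, dexp_ret, IH by (intros; auto using in_cons).
    simpl length; cbn [geom_avg]; rewrite Rplus_comm; f_equal; f_equal.
    apply geom_avg_ext; intros j _; simpl; rewrite <- app_assoc; reflexivity.
Qed.

Lemma pos_app x l1 l2 : ~ In x l1 -> Defs.pos x (l1 ++ x :: l2) = length l1.
Proof.
  induction l1 as [|a l1 IH]; intros H; simpl.
  - rewrite Nat.eqb_refl; reflexivity.
  - destruct (Nat.eqb_spec a x) as [->|]; [exfalso; apply H; simpl; auto|].
    rewrite IH; auto; intro; apply H; simpl; auto.
Qed.

Lemma gap_app m a c d :
  ~ In (m + 1)%nat a -> ~ In (m + 2)%nat a -> ~ In (m + 2)%nat c ->
  gap m (a ++ (m + 1)%nat :: c ++ (m + 2)%nat :: d) = length c.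
Proof.
  intros H1 H2 H3; unfold gap; rewrite pos_app by auto.
  replace (a ++ (m + 1)%nat :: c ++ (m + 2)%nat :: d)
    with ((a ++ (m + 1)%nat :: c) ++ (m + 2)%nat :: d) by (rewrite <- app_assoc; reflexivity).
  rewrite pos_app, length_app; simpl; [lia|].
  intros H; apply in_app_or in H as [H|[H|H]]; auto; lia.
Qed.

Lemma round_app M m bs r p x post : r = S (length p) ->
  round M m bs r (p ++ x :: post) =
  climb (fun y => M (typ m bs y) (typ m bs x)
                  && negb ((x =? m + 2)%nat && (y =? m + 1)%nat))
        (rev p) x post.
Proof.
  intros ->; unfold round.
  replace (S (length p) - 1)%nat with (length p) by lia.
  rewrite nth_middle, firstn_app, Nat.sub_diag, firstn_all, app_nil_r.
  rewrite skipn_app, skipn_all2, Nat.sub_succ_l, Nat.sub_diag by lia; reflexivity.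
Qed.

Lemma dexp_settle_nil M m bs S h : dexp (settle M m bs [] S) h = h S.
Proof. apply dexp_ret. Qed.

Lemma dexp_settle_cons M m bs r rs S h :
  dexp (settle M m bs (r :: rs) S) h =
  dexp (round M m bs r S) (fun S' => dexp (settle M m bs rs S') h).
Proof. apply dexp_bind. Qed.

Lemma rev_skipn_app_rev_firstn {A} n (l : list A) :
  rev (skipn n (rev l)) ++ rev (firstn n (rev l)) = l.
Proof. rewrite <- rev_app_distr, firstn_skipn; apply rev_involutive. Qed.

Lemma store_round m bs a b f :
  (length a + length b = m)%nat -> (forall y, In y (a ++ b) -> (y <= m)%nat) ->
  dexp (settle WO m bs [(m + 2)%nat] (a ++ (m + 1)%nat :: b ++ [(m + 2)%nat]))
       (fun S => f (gap m S)) =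
  geom_avg (length b) (fun j => f (length b - j)%nat).
Proof.
  intros Hlen Hsmall; rewrite dexp_settle_cons.
  replace (a ++ (m + 1)%nat :: b ++ [(m + 2)%nat])
    with ((a ++ (m + 1)%nat :: b) ++ [(m + 2)%nat]) by (rewrite <- app_assoc; reflexivity).
  rewrite round_app by (rewrite length_app; simpl; lia).
  replace (rev (a ++ (m + 1)%nat :: b)) with (rev b ++ (m + 1)%nat :: rev a)
    by (rewrite rev_app_distr; simpl; rewrite <- app_assoc; reflexivity).
  cbn [WO andb]; rewrite dexp_climb, length_rev.
  - apply geom_avg_ext; intros j Hj; rewrite dexp_settle_nil.
    rewrite skipn_app, firstn_app, length_rev.
    replace (j - length b)%nat with 0%nat by lia; simpl skipn; simpl firstn.
    rewrite !app_nil_r, rev_app_distr; simpl rev; rewrite rev_involutive, <- !app_assoc.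
    pose proof (rev_skipn_app_rev_firstn j b) as Hb.
    set (c := rev (skipn j (rev b))) in *; set (d := rev (firstn j (rev b))) in *.
    assert (Hc : forall y, In y c -> (y <= m)%nat)
      by (intros y Hy; apply Hsmall, in_or_app; right; rewrite <- Hb; apply in_or_app; auto).
    assert (Ha : forall y, In y a -> (y <= m)%nat)
      by (intros y Hy; apply Hsmall, in_or_app; auto).
    cbn [app]; rewrite gap_app.
    + unfold c; rewrite length_rev, length_skipn, length_rev; reflexivity.
    + intros H; specialize (Ha _ H); lia.
    + intros H; specialize (Ha _ H); lia.
    + intros H; specialize (Hc _ H); lia.
  - intros y Hy; apply in_rev in Hy.
    assert (y <= m)%nat by (apply Hsmall, in_or_app; auto).
    destruct (Nat.eqb_spec y (m + 1)); [lia|]; rewrite andb_false_r; reflexivity.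
  - rewrite !Nat.eqb_refl; reflexivity.
Qed.

Lemma last_rounds m bs p f :
  length p = m -> (forall y, In y p -> (y <= m)%nat) ->
  dexp (settle WO m bs [(m + 1)%nat; (m + 2)%nat] (p ++ [(m + 1)%nat; (m + 2)%nat]))
       (fun S => f (gap m S)) = gap_law m f.
Proof.
  intros Hlen Hsmall; rewrite dexp_settle_cons, round_app by lia; cbn [WO andb].
  rewrite <- (app_nil_r (rev p)), dexp_climb, app_nil_r, length_rev, Hlen; try exact I.
  - apply geom_avg_ext; intros k Hk.
    pose proof (rev_skipn_app_rev_firstn k p) as Hp.
    rewrite store_round, length_rev, length_firstn, length_rev, Nat.min_l.
    + reflexivity.
    + lia.
    + rewrite <- Hlen, <- (length_app _ (rev (firstn k (rev p)))), Hp; reflexivity.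
    + rewrite Hp; exact Hsmall.
  - intros y _; rewrite (proj2 (Nat.eqb_neq (m + 1) (m + 2))) by lia; reflexivity.
Qed.

Lemma settle_from m bs f k p :
  (length p + k = m)%nat -> (forall y, In y p -> (y <= m)%nat) ->
  dexp (settle WO m bs (seq (S (length p)) (k + 2)) (p ++ seq (S (length p)) (k + 2)))
       (fun S => f (gap m S)) = gap_law m f.
Proof.
  revert p; induction k as [|k IH]; intros p Hlen Hsmall.
  - replace (S (length p)) with (m + 1)%nat by lia.
    replace (seq (m + 1) (0 + 2)) with [(m + 1)%nat; (m + 2)%nat] by (simpl; f_equal; f_equal; lia).
    apply last_rounds; [lia|exact Hsmall].
  - cbn [Nat.add seq]; rewrite dexp_settle_cons, round_app by reflexivity.
    apply dexp_const_in; [apply climb_mass|].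
    intros q Hq; apply climb_support in Hq as [l [-> [Hl Hin]]].
    rewrite length_rev in Hl; rewrite <- Hl; apply IH; [lia|].
    intros y Hy; destruct (Hin y Hy) as [->|Hy']; [lia|].
    apply Hsmall, in_rev; exact Hy'.
Qed.

Lemma length_tylists n : length (tylists n) = (2 ^ n)%nat.
Proof.
  induction n as [|n IH]; [reflexivity|]; simpl.
  assert (Hdouble : forall ls : list (list ty),
    length (flat_map (fun l => [LD :: l; ST :: l]) ls) = (2 * length ls)%nat)
    by (induction ls as [|l ls IHls]; simpl; [|rewrite IHls]; lia).
  rewrite Hdouble, IH; lia.
Qed.

Lemma program_mass m : dexp (program m) (fun _ => 1) = 1.
Proof.
  assert (Huniform : forall w (ls : list (list ty)),
    dexp (map (fun bs => (w, bs)) ls) (fun _ => 1) = w * INR (length ls)).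
  { induction ls as [|l ls IH]; [cbn; ring|].
    simpl map; rewrite dexp_cons, IH, length_cons, S_INR; simpl; ring. }
  unfold program; rewrite Huniform, length_tylists, pow_INR, <- Rpow_mult_distr.
  replace (/ 2 * INR 2) with 1 by (simpl; field); apply pow1.
Qed.

Lemma PrB_WO m g :
  PrB WO m g = gap_law m (fun d => if (d =? g)%nat then 1 else 0).
Proof.
  unfold PrB, final_order; rewrite dprob_dexp, dexp_bind.
  apply dexp_const_in; [apply program_mass|]; intros [w bs] _.
  exact (settle_from m bs (fun d => if (d =? g)%nat then 1 else 0) m [] eq_refl
           ltac:(intros y [])).
Qed.

Lemma quarter_pow n : (/ 4) ^ n = (/ 2) ^ n * (/ 2) ^ n.
Proof. rewrite <- Rpow_mult_distr; f_equal; field. Qed.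

Lemma PrB_WO_0 m : PrB WO m 0 = 2 / 3 + / 3 * (/ 4) ^ m.
Proof.
  rewrite PrB_WO, gap_law_indicator.
  rewrite (geom_avg_ext m _ (fun k => (/ 2) ^ k)).
  2:{ intros k _; unfold geom_pmf; rewrite Nat.sub_0_r, Nat.ltb_irrefl, Nat.eqb_refl; reflexivity. }
  induction m as [|m IH]; [simpl; field|].
  rewrite geom_avg_S_r, IH, !quarter_pow; simpl; field.
Qed.

Lemma PrB_WO_pos g d : (0 < g)%nat ->
  PrB WO (g + d) g = (/ 2) ^ g * (/ 3 + / 6 * (/ 4) ^ d).
Proof.
  intros Hg; rewrite PrB_WO, gap_law_indicator.
  rewrite (geom_avg_ext _ _ (fun k => if (g <=? k)%nat then (/ 2) ^ S (k - g) else 0)).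
  2:{ intros k _; destruct (Nat.leb_spec g k); [|reflexivity].
      unfold geom_pmf; rewrite (proj2 (Nat.ltb_lt (k - g) k)) by lia; reflexivity. }
  induction d as [|d IH].
  - destruct g as [|g]; [lia|]; rewrite Nat.add_0_r, geom_avg_S_r.
    rewrite (geom_avg_ext g _ (fun _ => 0)), geom_avg_const.
    2:{ intros j Hj; destruct (Nat.leb_spec (S g) j); [lia|reflexivity]. }
    rewrite Nat.leb_refl, (proj2 (Nat.leb_gt (S g) g)), Nat.sub_diag by lia.
    simpl; field.
  - rewrite Nat.add_succ_r, geom_avg_S_r, IH.
    rewrite (proj2 (Nat.leb_le g (S (g + d)))), (proj2 (Nat.leb_le g (g + d))) by lia.
    replace (S (g + d) - g)%nat with (S d) by lia; replace (g + d - g)%nat with d by lia.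
    rewrite <- Nat.add_succ_r, pow_add, !quarter_pow; simpl; field.
Qed.

Lemma Un_cv_const_plus_quarter_pow a b : Un_cv (fun n => a + b * (/ 4) ^ n) a.
Proof.
  apply (Un_cv_ext (fun n => a + b / 2 ^ n * (1 / 2 ^ n))).
  { intros n; rewrite quarter_pow, pow_inv; field; apply pow_nonzero; lra. }
  assert (Hconst : Un_cv (fun _ => a) a).
  { intros eps Heps; exists O; intros n _; unfold R_dist.
    rewrite Rminus_diag, Rabs_R0; exact Heps. }
  pose proof (CV_plus _ _ _ _ Hconst (CV_mult _ _ _ _ (cv_pow_half b) (cv_pow_half 1))) as Hlim.
  rewrite Rmult_0_r, Rplus_0_r in Hlim; exact Hlim.
Qed.

Theorem theorem1 :
  Un_cv (fun m => PrB WO m 0) (2 / 3) /\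
  (forall gamma : nat, (0 < gamma)%nat ->
     Un_cv (fun m => PrB WO m gamma) (/ 2 ^ gamma / 3)).
Proof.
  split.
  - apply (Un_cv_ext (fun m => 2 / 3 + / 3 * (/ 4) ^ m)).
    + intros m; symmetry; apply PrB_WO_0.
    + apply Un_cv_const_plus_quarter_pow.
  - intros g Hg; apply (CV_shift _ g).
    apply (Un_cv_ext (fun d => / 2 ^ g / 3 + (/ 2) ^ g / 6 * (/ 4) ^ d)).
    + intros d; rewrite Nat.add_comm, PrB_WO_pos, pow_inv by exact Hg.
      field; apply pow_nonzero; lra.
    + apply Un_cv_const_plus_quarter_pow.
Qed.
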